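(* Let $(V,E,c,p)$ be a PCSTP instance with $s:=|T_p|\ge 2$, let $H$ be a terminal-regions decomposition, and enumerate $T_p=\{t_1,\dots,t_s\}$ so that $r^{pc}_H(t_1)\le r^{pc}_H(t_2)\le\dots\le r^{pc}_H(t_s)$. Let $v_i\in V\setminus T_p$. If there is an optimal solution $S$ with $v_i\in V(S)$, then $$C(S)\ \ge\ \underline{d}(v_i,\bar v_{i,1})+\underline{d}(v_i,\bar v_{i,2})+\sum_{k=1}^{s-2} r^{pc}_H(t_k).$$
   Context: A PCSTP instance $(V,E,c,p)$: finite undirected connected graph $G=(V,E)$, $c:E\to\mathbb{Q}_{>0}$, $p:V\to\mathbb{Q}_{\ge0}$. For a tree $S\subseteq G$ (connected acyclic subgraph with at least one vertex), $C(S):=\sum_{e\in E(S)}c(e)+\sum_{v\in V\setminus V(S)}p(v)$; an optimal solution is a tree minimizing $C$. $T_p:=\{v\in V:p(v)>0\}$. $d(u,w)$ is the shortest-path distance between $u,w$ in $G$ w.r.t. $c$. $\underline{d}(u,w)$ is the shortest-path distance between $u$ and $w$ in the subgraph of $G$ induced by $V\setminus(T_p\setminus\{u,w\})$ ($+\infty$ if none). For $v_i\in V\setminus T_p$, $\bar v_{i,1},\bar v_{i,2},\dots$ denote the potential terminals ordered by nondecreasing $\underline{d}(v_i,\cdot)$ (ties broken arbitrarily). A terminal-regions decomposition is a partition $H=\{H_t: t\in T_p\}$ of $V$ with $H_t\cap T_p=\{t\}$ and the subgraph induced by each $H_t$ connected. For $t\in T_p$, $r^{pc}_H(t):=\min\{p(t),\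 \min\{d(t,v): v\notin H_t\}\}$. *)

From HB Require Import structures.
From mathcomp Require Import all_boot all_order all_algebra.
Set Implicit Arguments. Unset Strict Implicit. Unset Printing Implicit Defensive.
Import Order.TTheory GRing.Theory Num.Theory.
Local Open Scope ring_scope.

(* A graph on a finite vertex type V is given by an edge set
   E : {set {set V}} whose elements are 2-element vertex sets. *)

Definition adjrel (V : finType) (ES : {set {set V}}) : rel V :=
  fun x y => [set x; y] \in ES.

(* Extended rationals Q ∪ {+oo}: None stands for +oo. *)
Definition ext := option rat.
Definition ext_le (a b : ext) : bool :=
  match a, b with
  | _, None => true
  | None, Some _ => false
  | Some x, Some y => x <= y
  end.
Definition ext_add (a b : ext) : ext :=
  match a, b with
  | Some x, Some y => Some (x + y)
  | _, _ => None
  end.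
Definition ext_min (a b : ext) : ext := if ext_le a b then a else b.
Definition ext_minseq (s : seq ext) : ext := foldr ext_min None s.

Definition walk_cost (V : finType) (c : {set V} -> rat) (u : V) (s : seq V) : rat :=
  \sum_(x <- pairmap (fun a b => c [set a; b]) u s) x.

(* Since costs are positive,
   the minimum over walks is attained by a simple path u :: s (uniq),
   which has at most #|V| vertices. *)
Definition dist_in (V : finType) (E : {set {set V}}) (c : {set V} -> rat)
    (A : {set V}) (u w : V) : ext :=
  ext_minseq (flatten
    [seq [seq Some (walk_cost c u (tval t))
         | t <- enum {: k.-tuple V}
         & [&& uniq (u :: tval t), path (adjrel E) u (tval t),
               last u (tval t) == w & all (fun x => x \in A) (u :: tval t)]]
    | k <- iota 0 #|V|.+1]).

Definition dist (V : finType) (E : {set {set V}}) (c : {set V} -> rat) (u w : V) : ext :=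
  dist_in E c setT u w.

Definition Tp (V : finType) (p : V -> rat) : {set V} := [set v | 0 < p v].

Definition dbar (V : finType) (E : {set {set V}}) (c : {set V} -> rat) (p : V -> rat)
    (u w : V) : ext :=
  dist_in E c (~: (Tp p :\ u :\ w)) u w.

Definition pcstp_instance (V : finType) (E : {set {set V}}) (c : {set V} -> rat)
    (p : V -> rat) : Prop :=
  [/\ forall e, e \in E -> #|e| = 2,
      forall x y : V, connect (adjrel E) x y,
      forall e, e \in E -> 0 < c e
    & forall v, 0 <= p v].

Definition acyclic (V : finType) (ES : {set {set V}}) : Prop :=
  forall s : seq V, uniq s -> (3 <= size s)%N -> ~~ cycle (adjrel ES) s.

Definition is_tree (V : finType) (E : {set {set V}}) (VS : {set V}) (ES : {set {set V}}) : Prop :=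
  [/\ VS != set0, ES \subset E, forall e, e \in ES -> e \subset VS,
      forall x y, x \in VS -> y \in VS -> connect (adjrel ES) x y
    & acyclic ES].

Definition pc_cost (V : finType) (c : {set V} -> rat) (p : V -> rat)
    (VS : {set V}) (ES : {set {set V}}) : rat :=
  \sum_(e in ES) c e + \sum_(v in ~: VS) p v.

Definition optimal (V : finType) (E : {set {set V}}) (c : {set V} -> rat) (p : V -> rat)
    (VS : {set V}) (ES : {set {set V}}) : Prop :=
  is_tree E VS ES /\
  forall VS' ES', is_tree E VS' ES' -> pc_cost c p VS ES <= pc_cost c p VS' ES'.

(* Terminal-regions decomposition {H t : t in T_p} (H t is only meaningful for t in T_p). *)
Definition terminal_regions (V : finType) (E : {set {set V}}) (p : V -> rat)
    (H : V -> {set V}) : Prop :=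
  [/\ forall v, exists2 t, t \in Tp p & v \in H t,
      forall t t', t \in Tp p -> t' \in Tp p -> t != t' -> [disjoint H t & H t'],
      forall t, t \in Tp p -> H t :&: Tp p = [set t]
    & forall t, t \in Tp p -> forall x y, x \in H t -> y \in H t ->
        connect (adjrel [set e in E | e \subset H t]) x y].

Definition rpc (V : finType) (E : {set {set V}}) (c : {set V} -> rat) (p : V -> rat)
    (H : V -> {set V}) (t : V) : rat :=
  match ext_minseq [seq dist E c t v | v <- enum (~: H t)] with
  | Some x => Num.min (p t) x
  | None => p t
  end.

(** Root the optimal tree [S] at [v_i] and charge every other vertex of [S]
    with the cost of the edge to its parent.  Optimality forbids non-terminal
    leaves (deleting one would be cheaper), so every non-terminal vertex other
    than [v_i] has a child and [v_i] has at least two.  Descending from two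
    children of [v_i] gives terminals [a], [b] whose paths to [v_i] avoid all
    other potential terminals, so their charges bound
    [d(v_i,a) + d(v_i,b)].  Every other terminal [t] of [S] leaves its region
    [H_t] on its way to the root, and the stretch inside [H_t] costs at least
    [r(t)]; these stretches are pairwise disjoint and, since the descents
    follow them, disjoint from the two branches (the one stretch that might
    reach [v_i] is followed by the first descent).  Terminals outside [S] pay
    their prize [p(t) >= r(t)].  Hence
    [d(v_i,a) + d(v_i,b) + sum_(t <> a,b) r(t) <= C(S)], and the sorted sums
    of the statement are at most the left-hand side. *)

From HB Require Import structures.
From mathcomp Require Import all_boot all_order all_algebra.
From mathcomp Require Import zify ring lra.
Import Order.TTheory GRing.Theory Num.Theory.
Local Open Scope ring_scope.
Set Implicit Arguments. Unset Strict Implicit. Unset Printing Implicit Defensive.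

Lemma ext_le_refl a : ext_le a a.
Proof. by case: a => //= x. Qed.

Lemma ext_le_trans a b d : ext_le a b -> ext_le b d -> ext_le a d.
Proof.
by case: a => [x|]; case: b => [y|]; case: d => [z|] //=; apply: le_trans.
Qed.

Lemma ext_le_total a b : ext_le a b || ext_le b a.
Proof. by case: a => [x|]; case: b => [y|] //=; apply: le_total. Qed.

Lemma ext_minseq_le x s : x \in s -> ext_le (ext_minseq s) x.
Proof.
elim: s => //= y s IH; rewrite in_cons /ext_min => /orP [/eqP ->|x_in].
  case: ifP => [_|/negbT not_le]; first exact: ext_le_refl.
  by case/orP: (ext_le_total (ext_minseq s) y) => //; rewrite (negbTE not_le).
case: ifP => [le_y|_]; last exact: IH.
exact: ext_le_trans le_y (IH x_in).
Qed.

Lemma ext_leD a b a' b' :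
  ext_le a a' -> ext_le b b' -> ext_le (ext_add a b) (ext_add a' b').
Proof.
case: a => [x|]; case: b => [y|]; case: a' => [x'|]; case: b' => [y'|] //=.
exact: lerD.
Qed.

Lemma ext_addC a b : ext_add a b = ext_add b a.
Proof. by case: a => [x|]; case: b => [y|] //=; rewrite addrC. Qed.

Section Walks.
Variables (V : finType) (E : {set {set V}}) (c : {set V} -> rat).

Lemma dist_in_le_walk (A : {set V}) u s :
  uniq (u :: s) -> path (adjrel E) u s -> all (fun x => x \in A) (u :: s) ->
  ext_le (dist_in E c A u (last u s)) (Some (walk_cost c u s)).
Proof.
move=> u_s_uniq u_s_path u_s_in.
have size_s : (size s < #|V|.+1)%N.
  have /card_uniqP card_u_s := u_s_uniq.
  by have := max_card (mem (u :: s)); rewrite card_u_s /=; lia.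
apply: ext_minseq_le; apply/flattenP; eexists.
  by apply/mapP; exists (size s); rewrite // mem_iota.
apply/mapP; exists (in_tuple s) => //.
by rewrite mem_filter mem_enum andbT; apply/and4P.
Qed.

Lemma pairmap_map_iota (h : V -> V -> rat) (F : nat -> V) m k :
  pairmap h (F m) [seq F i | i <- iota m.+1 k] = [seq h (F i) (F i.+1) | i <- iota m k].
Proof. by elim: k m => //= k IH m; rewrite IH. Qed.

Lemma path_map_iota (F : nat -> V) m k :
  (forall i, m <= i < m + k -> adjrel E (F i) (F i.+1))%N ->
  path (adjrel E) (F m) [seq F i | i <- iota m.+1 k].
Proof.
elim: k m => //= k IH m F_adj; rewrite F_adj /=; last lia.
by apply: IH => i i_range; apply: F_adj; lia.
Qed.

Lemma last_map_iota (F : nat -> V) m k :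
  last (F m) [seq F i | i <- iota m.+1 k] = F (m + k)%N.
Proof. by elim: k m => [|k IH] m /=; rewrite ?addn0 // IH addSnnS. Qed.

Lemma dist_in_le_chain (A : {set V}) (F : nat -> V) j :
  {in [pred i | (i <= j)%N] &, injective F} ->
  (forall i, (i < j)%N -> [set F i; F i.+1] \in E) ->
  (forall i, (i <= j)%N -> F i \in A) ->
  ext_le (dist_in E c A (F 0%N) (F j)) (Some (\sum_(i < j) c [set F i; F i.+1])).
Proof.
move=> F_inj F_edge F_in.
have cost_chain :
    walk_cost c (F 0%N) [seq F i | i <- iota 1 j] = \sum_(i < j) c [set F i; F i.+1].
  rewrite /walk_cost pairmap_map_iota big_map.
  by rewrite -(big_mkord xpredT (fun i => c [set F i; F i.+1])) /index_iota subn0.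
have := @dist_in_le_walk A (F 0%N) [seq F i | i <- iota 1 j].
rewrite last_map_iota add0n cost_chain; apply.
- have -> : F 0%N :: [seq F i | i <- iota 1 j] = [seq F i | i <- iota 0 j.+1] by [].
  rewrite map_inj_in_uniq ?iota_uniq // => x y; rewrite !mem_iota => x_le y_le.
  by apply: F_inj; rewrite inE; lia.
- apply: path_map_iota => i i_lt; have := F_edge i; rewrite /adjrel; apply; lia.
- rewrite /= F_in //=; apply/allP => x /mapP [i]; rewrite mem_iota => i_le ->.
  by apply: F_in; lia.
Qed.

End Walks.

Lemma rpc_le_prize (V : finType) E c p (H : V -> {set V}) (t : V) : rpc E c p H t <= p t.
Proof. by rewrite /rpc; case: (ext_minseq _) => [x|] //=; rewrite ge_min lexx. Qed.

Lemma rpc_le_dist_out (V : finType) E c p (H : V -> {set V}) (t v : V) d :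
  v \notin H t -> ext_le (dist E c t v) (Some d) -> rpc E c p H t <= d.
Proof.
move=> v_out le_d.
have : ext_le (ext_minseq [seq dist E c t v | v <- enum (~: H t)]) (dist E c t v).
  by apply/ext_minseq_le/map_f; rewrite mem_enum inE.
move/ext_le_trans/(_ le_d); rewrite /rpc; case: (ext_minseq _) => [x|] //= le_x.
by rewrite ge_min le_x orbT.
Qed.

Lemma sum_disjoint_family_le (T I : finType) (J : {set I}) (W : I -> {set T})
    (U : {set T}) (f : T -> rat) :
  (forall x, x \in U -> 0 <= f x) -> (forall i, i \in J -> W i \subset U) ->
  (forall i j, i \in J -> j \in J -> i != j -> [disjoint W i & W j]) ->
  \sum_(i in J) \sum_(x in W i) f x <= \sum_(x in U) f x.
Proof.
move=> f_ge0 W_sub W_disj.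
have sum_W i : i \in J ->
    \sum_(x in W i) f x = \sum_(x in U) (if x \in W i then f x else 0).
  move=> /W_sub /subsetP W_U; rewrite -big_mkcondr; apply: eq_bigl => x.
  by case: (boolP (x \in W i)) => [/W_U ->|_]; rewrite ?andbF.
rewrite (eq_bigr _ sum_W) exchange_big /=; apply: ler_sum => x x_in.
have [i0 /andP [i0_in x_i0]|none] := pickP (fun i => (i \in J) && (x \in W i)).
  rewrite (bigD1 i0) //= x_i0 big1 ?addr0 // => i /andP [i_in i_neq].
  case: ifP => // x_i.
  by rewrite (disjointFr (W_disj i i0 i_in i0_in i_neq) x_i) in x_i0.
rewrite big1 ?f_ge0 // => i i_in; case: ifP => // x_i.
by have := none i; rewrite i_in x_i.
Qed.

Lemma sum_le_subset (T : finType) (A B : {set T}) (f : T -> rat) :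
  A \subset B -> (forall x, x \in B -> 0 <= f x) -> \sum_(x in A) f x <= \sum_(x in B) f x.
Proof.
move=> AB f_ge0; rewrite [X in _ <= X](big_setID A) /= (setIidPr AB) lerDl.
by apply: sumr_ge0 => x /setDP [x_B _]; apply: f_ge0.
Qed.

Lemma sum_setC1 (T : finType) (f : T -> rat) a :
  \sum_(v in ~: [set a]) f v = \sum_v f v - f a.
Proof.
rewrite [X in _ = X - _](bigD1 a) //=.
have -> : \sum_(v in ~: [set a]) f v = \sum_(v | v != a) f v.
  by apply: eq_bigl => v; rewrite !inE.
ring.
Qed.

Lemma sorted_first_two_le (T : eqType) (D : T -> ext) (s : seq T) x0 a b :
  sorted (fun u v => ext_le (D u) (D v)) s -> a \in s -> b \in s -> a != b ->
  ext_le (ext_add (D (nth x0 s 0)) (D (nth x0 s 1))) (ext_add (D a) (D b)).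
Proof.
move=> s_sorted; wlog lt_ab : a b / (index a s < index b s)%N
  => [gen a_in b_in ab|a_in b_in _].
  have : index a s != index b s.
    by apply: contra ab => /eqP eq_ab; rewrite -(nth_index x0 a_in) eq_ab nth_index.
  rewrite neq_ltn => /orP [lt_ab|lt_ba]; first exact: (gen a b lt_ab a_in b_in ab).
  by rewrite [ext_add (D a) _]ext_addC; apply: (gen b a lt_ba b_in a_in); rewrite eq_sym.
have D_trans : transitive (fun u v => ext_le (D u) (D v)).
  by move=> ? ? ?; apply: ext_le_trans.
have le_nth := sorted_leq_nth D_trans (fun u => ext_le_refl (D u)) x0 s_sorted.
have := index_mem a s; have := index_mem b s; rewrite a_in b_in => b_lt a_lt.
rewrite -[a](nth_index x0 a_in) -[b](nth_index x0 b_in).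
by apply: ext_leD; apply: le_nth; rewrite ?inE; lia.
Qed.

Lemma sorted_le_last_two (T : eqType) (g : T -> rat) (s : seq T) x0 a b :
  sorted (fun u v => g u <= g v) s -> a \in s -> b \in s -> a != b ->
  g a + g b <= g (nth x0 s (size s).-2) + g (nth x0 s (size s).-1).
Proof.
move=> s_sorted; wlog lt_ab : a b / (index a s < index b s)%N
  => [gen a_in b_in ab|a_in b_in _].
  have : index a s != index b s.
    by apply: contra ab => /eqP eq_ab; rewrite -(nth_index x0 a_in) eq_ab nth_index.
  rewrite neq_ltn => /orP [lt_ab|lt_ba]; first exact: (gen a b lt_ab a_in b_in ab).
  by rewrite [g a + _]addrC; apply: (gen b a lt_ba b_in a_in); rewrite eq_sym.
have g_trans : transitive (fun u v => g u <= g v) by move=> ? ? ?; apply: le_trans.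
have le_nth := sorted_leq_nth g_trans (fun u => lexx (g u)) x0 s_sorted.
have := index_mem a s; have := index_mem b s; rewrite a_in b_in => b_lt a_lt.
rewrite -[a](nth_index x0 a_in) -[b](nth_index x0 b_in).
by apply: lerD; apply: le_nth; rewrite ?inE; lia.
Qed.

Lemma sum_sorted_prefix_le (T : finType) (g : T -> rat) (A : {set T}) (s : seq T) x0 a b :
  perm_eq s (enum A) -> sorted (fun u v => g u <= g v) s ->
  a \in A -> b \in A -> a != b ->
  \sum_(k < #|A| - 2) g (nth x0 s k) <= \sum_(t in A :\ a :\ b) g t.
Proof.
move=> s_perm s_sorted a_in b_in ab.
have s_mem x : (x \in s) = (x \in A) by rewrite (perm_mem s_perm) mem_enum.
have size_s : size s = (#|A| - 2).+2.
  have ab_sub : [set a; b] \subset A by apply/subsetP => x /set2P [] ->.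
  have := subset_leq_card ab_sub; rewrite cards2 ab (perm_size s_perm) -cardE; lia.
have sum_s : \sum_(t in A) g t = \sum_(k < #|A| - 2) g (nth x0 s k)
    + g (nth x0 s (#|A| - 2)) + g (nth x0 s (#|A| - 2).+1).
  rewrite -big_enum -(perm_big _ s_perm) (big_nth x0) big_mkord size_s.
  by rewrite 2!big_ord_recr.
have b_in' : b \in A :\ a by rewrite in_setD1 eq_sym ab.
have sum_ab : \sum_(t in A) g t = g a + g b + \sum_(t in A :\ a :\ b) g t.
  by rewrite (big_setD1 a a_in) (big_setD1 b b_in') /= addrA.
have := sorted_le_last_two x0 s_sorted (_ : a \in s) (_ : b \in s) ab.
rewrite !s_mem size_s /= => /(_ a_in b_in); lra.
Qed.

Section OptimalTree.
Variables (V : finType) (E : {set {set V}}) (VS : {set V}) (ES : {set {set V}}) (r : V).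
Hypothesis tree : is_tree E VS ES.
Hypothesis root_in : r \in VS.

Local Notation adj := (adjrel ES).

Lemma tree_edges_sub : ES \subset E.
Proof. by case: tree. Qed.

Lemma edge_ends_in x y : adj x y -> x \in VS /\ y \in VS.
Proof.
case: tree => _ _ edge_sub _ _ xy; have /subsetP xy_sub := edge_sub _ xy.
by split; apply: xy_sub; rewrite !inE eqxx ?orbT.
Qed.

Lemma connect_root x : x \in VS -> connect adj r x.
Proof. by case: tree => _ _ _ conn _; apply: conn. Qed.

Definition reachable_in n z :=
  [exists t : n.-tuple V, path adj r t && (last r t == z)].

(** [depth z] is the length of a shortest walk from [r] to [z], and [0] if
    there is none. *)
Lemma depth_exists z :
  exists n, if connect adj r z then reachable_in n z else n == 0%N.
Proof.
case: (boolP (connect adj r z)) => [/connectP [s s_path s_last]|_]; last by exists 0%N.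
exists (size s); apply/existsP; exists (in_tuple s).
by rewrite /= s_path -s_last eqxx.
Qed.

Definition depth z := ex_minn (depth_exists z).

Lemma reachable_depth z : z \in VS -> reachable_in (depth z) z.
Proof.
by move=> z_in; rewrite /depth; case: ex_minnP => n; rewrite connect_root.
Qed.

Lemma depth_min z n : z \in VS -> reachable_in n z -> (depth z <= n)%N.
Proof.
move=> z_in reach_n; rewrite /depth; case: ex_minnP => m _; apply.
by rewrite connect_root.
Qed.

Lemma reachable0 z : reachable_in 0 z -> z = r.
Proof.
by case/existsP=> t /andP [_ /eqP <-]; rewrite (size0nil (size_tuple t)).
Qed.

Lemma reachable_root : reachable_in 0 r.
Proof. by apply/existsP; exists [tuple]; rewrite /= eqxx. Qed.

Lemma reachableS n y z : reachable_in n y -> adj y z -> reachable_in n.+1 z.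
Proof.
case/existsP=> t /andP [t_path /eqP t_last] yz; apply/existsP.
have size_t : size (rcons t z) == n.+1 by rewrite size_rcons size_tuple.
by exists (Tuple size_t); rewrite /= rcons_path t_path t_last yz last_rcons eqxx.
Qed.

Lemma reachable_pred n z : reachable_in n.+1 z -> exists2 y, reachable_in n y & adj y z.
Proof.
case/existsP=> t; have := size_tuple t; case/lastP: (tval t) => [|s x] //.
rewrite size_rcons rcons_path last_rcons => -[size_s] /andP [/andP [s_path sx] /eqP <-].
exists (last r s) => //.
by apply/existsP; exists (Tuple (introT eqP size_s)); rewrite /= s_path eqxx.
Qed.

Lemma depth_root : depth r = 0%N.
Proof. by apply/eqP; rewrite -leqn0 depth_min // reachable_root. Qed.

Lemma depth_eq0 z : z \in VS -> (depth z == 0%N) = (z == r).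
Proof.
move=> z_in; apply/eqP/eqP => [depth0|->]; last exact: depth_root.
by apply: reachable0; rewrite -depth0 reachable_depth.
Qed.

Lemma depth_gt0 z : z \in VS -> z != r -> (0 < depth z)%N.
Proof. by move=> z_in; rewrite lt0n depth_eq0. Qed.

Lemma depth_edge y z : adj y z -> (depth z <= (depth y).+1)%N.
Proof.
move=> yz; have [y_in z_in] := edge_ends_in yz.
exact: depth_min z_in (reachableS (reachable_depth y_in) yz).
Qed.

Lemma exists_parent z : z \in VS -> z != r ->
  exists y, adj y z && ((depth y).+1 == depth z).
Proof.
move=> z_in z_neq; have := reachable_depth z_in.
rewrite -(prednK (depth_gt0 z_in z_neq)) => /reachable_pred [y reach_y yz].
have [y_in _] := edge_ends_in yz.
have := depth_min y_in reach_y; have := depth_edge yz.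
by exists y; rewrite yz /=; apply/eqP; lia.
Qed.

Definition parent z :=
  if z == r then r else odflt r [pick y | adj y z && ((depth y).+1 == depth z)].

Lemma parent_spec z : z \in VS -> z != r ->
  [/\ adj (parent z) z, (depth (parent z)).+1 = depth z & parent z \in VS].
Proof.
move=> z_in z_neq; rewrite /parent (negbTE z_neq).
case: pickP => [y /andP [yz /eqP depth_y]|none] /=.
  by split=> //; case: (edge_ends_in yz).
by have [y] := exists_parent z_in z_neq; rewrite none.
Qed.

Lemma parent_root : parent r = r.
Proof. by rewrite /parent eqxx. Qed.

Lemma parent_in z : z \in VS -> parent z \in VS.
Proof.
move=> z_in; have [->|z_neq] := eqVneq z r; first by rewrite parent_root.
by case: (parent_spec z_in z_neq).
Qed.

Lemma depth_parent z : z \in VS -> depth (parent z) = (depth z).-1.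
Proof.
move=> z_in; have [->|z_neq] := eqVneq z r; first by rewrite parent_root depth_root.
by case: (parent_spec z_in z_neq) => _ <-.
Qed.

Lemma iter_parent_in k z : z \in VS -> iter k parent z \in VS.
Proof. by move=> z_in; elim: k => //= k; apply: parent_in. Qed.

Lemma depth_iter_parent k z : z \in VS -> depth (iter k parent z) = (depth z - k)%N.
Proof.
move=> z_in; elim: k => [|k IH] /=; first by rewrite subn0.
by rewrite depth_parent ?iter_parent_in // IH; lia.
Qed.

Lemma iter_parent_depth z : z \in VS -> iter (depth z) parent z = r.
Proof.
by move=> z_in; apply/eqP; rewrite -depth_eq0 ?iter_parent_in // depth_iter_parent // subnn.
Qed.

Lemma iter_parent_inj z i j : z \in VS -> (i <= depth z)%N -> (j <= depth z)%N ->
  iter i parent z = iter j parent z -> i = j.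
Proof. by move=> z_in le_i le_j /(congr1 depth); rewrite !depth_iter_parent //; lia. Qed.

Lemma iter_parent_neq_root z k : z \in VS -> (k < depth z)%N -> iter k parent z != r.
Proof.
by move=> z_in lt_k; rewrite -depth_eq0 ?iter_parent_in // depth_iter_parent //; lia.
Qed.

Lemma iter_parent_edge z k : z \in VS -> (k < depth z)%N ->
  [set iter k parent z; iter k.+1 parent z] \in ES.
Proof.
move=> z_in lt_k.
have [] := parent_spec (iter_parent_in k z_in) (iter_parent_neq_root z_in lt_k).
by rewrite /adjrel setUC.
Qed.

Lemma depth_lt_card z : z \in VS -> (depth z < #|V|)%N.
Proof.
move=> z_in; have := max_card [set iter (nat_of_ord i) parent z | i : 'I_(depth z).+1].
rewrite card_imset ?card_ord // => i j /(iter_parent_inj z_in) eq_ij.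
by apply/val_inj/eq_ij; rewrite -ltnS.
Qed.

Definition top z := iter (depth z).-1 parent z.

Definition root_child w := [&& w \in VS, w != r & parent w == r].

Lemma top_child z : z \in VS -> z != r -> root_child (top z).
Proof.
move=> z_in z_neq; have depth_z := depth_gt0 z_in z_neq.
rewrite /root_child /top iter_parent_in ?iter_parent_neq_root //=; last lia.
by rewrite -iterS prednK // iter_parent_depth.
Qed.

Lemma top_iter_parent z k : z \in VS -> (k < depth z)%N -> top (iter k parent z) = top z.
Proof. by move=> z_in lt_k; rewrite /top depth_iter_parent // -iterD; congr iter; lia. Qed.

Definition edges_avoiding x := [set e in ES | x \notin e].

Lemma connect_iter_parent_avoiding x z k : z \in VS -> (k <= depth z)%N ->
  (forall i, (i <= k)%N -> iter i parent z != x) ->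
  connect (adjrel (edges_avoiding x)) z (iter k parent z).
Proof.
move=> z_in; elim: k => [|k IH] le_k avoid; first exact: connect0.
apply: connect_trans (IH _ _) (connect1 _) => [|i le_i|]; [lia | apply: avoid; lia |].
rewrite /adjrel inE iter_parent_edge //= !inE negb_or.
by rewrite ![x == _]eq_sym; apply/andP; split; [exact: (avoid k) | exact: (avoid k.+1)].
Qed.

Variables (c : {set V} -> rat) (p : V -> rat).
Hypothesis cost_gt0 : forall e, e \in E -> 0 < c e.
Hypothesis tree_optimal :
  forall VS' ES', is_tree E VS' ES' -> pc_cost c p VS ES <= pc_cost c p VS' ES'.
Hypothesis root_nonterminal : r \notin Tp p.

Lemma tree_cost_gt0 e : e \in ES -> 0 < c e.
Proof. by move=> e_in; apply/cost_gt0/(subsetP tree_edges_sub). Qed.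

Lemma nonterminal_prize x : x \notin Tp p -> p x <= 0.
Proof. by rewrite inE -leNgt. Qed.

Lemma pc_cost_delete x : x \in VS ->
  pc_cost c p (VS :\ x) (edges_avoiding x) =
  pc_cost c p VS ES - \sum_(e in ES | x \in e) c e + p x.
Proof.
move=> x_in; rewrite /pc_cost.
have split_edges : \sum_(e in ES) c e =
    \sum_(e in ES | x \in e) c e + \sum_(e in ES | x \notin e) c e.
  by rewrite (bigID (fun e : {set V} => x \in e)).
have kept_edges : \sum_(e in edges_avoiding x) c e = \sum_(e in ES | x \notin e) c e.
  by apply: eq_bigl => e; rewrite inE.
have lost_prize : \sum_(v in ~: (VS :\ x)) p v = p x + \sum_(v in ~: VS) p v.
  rewrite (bigD1 x) ?inE ?eqxx //=; congr (_ + _); apply: eq_bigl => v; rewrite !inE.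
  by case: eqVneq => [->|]; rewrite ?x_in ?andbT.
rewrite split_edges kept_edges lost_prize.
ring.
Qed.

Lemma is_tree_delete x y : x \in VS -> y \in VS -> y != x ->
  (forall z, z \in VS -> z != x -> connect (adjrel (edges_avoiding x)) z y) ->
  is_tree E (VS :\ x) (edges_avoiding x).
Proof.
move=> x_in y_in y_neq conn; case: tree => _ ES_sub edge_sub _ acyc; split.
- by apply/set0Pn; exists y; rewrite in_setD1 y_neq.
- by apply: subset_trans ES_sub; apply/subsetP => e; rewrite inE => /andP [].
- move=> e; rewrite inE => /andP [e_in x_notin]; apply/subsetP => v v_in.
  by rewrite in_setD1 (subsetP (edge_sub _ e_in)) // andbT; apply: contraNneq x_notin => <-.
- move=> v w; rewrite !in_setD1 => /andP [v_neq v_in] /andP [w_neq w_in].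
  apply: connect_trans (conn _ v_in v_neq) _.
  have adj_sym : symmetric (adjrel (edges_avoiding x)) by move=> a b; rewrite /adjrel setUC.
  by rewrite (sym_connect_sym adj_sym) conn.
- move=> s s_uniq s_size; apply: contra (acyc s s_uniq s_size).
  by apply: sub_cycle => a b; rewrite /adjrel inE => /andP [].
Qed.

(** Otherwise deleting [x] would yield a strictly cheaper tree. *)
Lemma delete_disconnects x y e : x \notin Tp p -> e \in ES -> x \in e ->
  y \in VS -> y != x ->
  ~ (forall z, z \in VS -> z != x -> connect (adjrel (edges_avoiding x)) z y).
Proof.
move=> x_nt e_in x_e y_in y_neq conn.
have x_in : x \in VS by case: tree => _ _ edge_sub _ _; apply: (subsetP (edge_sub _ e_in)).
have := tree_optimal (is_tree_delete x_in y_in y_neq conn); rewrite pc_cost_delete //.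
have : c e <= \sum_(f in ES | x \in f) c f.
  rewrite (bigD1 e) /= ?e_in ?x_e // lerDl.
  by apply: sumr_ge0 => f /andP [/andP [f_in _] _]; apply/ltW/tree_cost_gt0.
have := tree_cost_gt0 e_in; have := nonterminal_prize x_nt; lra.
Qed.

Lemma nonterminal_has_child x : x \in VS -> x != r -> x \notin Tp p ->
  exists y, [/\ y \in VS, y != r & parent y = x].
Proof.
move=> x_in x_neq x_nt.
have [y /and3P [y_in y_neq /eqP y_par]|no_child] :=
  pickP (fun y => [&& y \in VS, y != r & parent y == x]); first by exists y.
have r_neq : r != x by rewrite eq_sym.
case: (delete_disconnects x_nt (iter_parent_edge (k := 0) x_in (depth_gt0 x_in x_neq))
        (set21 _ _) root_in r_neq) => z z_in z_neq.
rewrite -(iter_parent_depth z_in); apply: connect_iter_parent_avoiding => // -[|i] le_i //=.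
apply/eqP => par_eq; have := no_child (iter i parent z).
by rewrite iter_parent_in // iter_parent_neq_root // par_eq eqxx.
Qed.

Lemma is_tree_vertex v : is_tree E [set v] set0.
Proof.
split.
- by apply/set0Pn; exists v; rewrite inE.
- exact: sub0set.
- by move=> e; rewrite inE.
- by move=> x y; rewrite !inE => /eqP -> /eqP ->; exact: connect0.
- by move=> [|x [|y s]] //= _ _; rewrite /adjrel inE.
Qed.

Lemma root_has_child : (exists t, t \in Tp p) -> exists w, root_child w.
Proof.
move=> [t t_term]; have [w|no_child] := pickP root_child; first by exists w.
have VS_root : VS = [set r].
  apply/setP => z; rewrite inE; apply/idP/eqP => [z_in|->//].
  apply/eqP; apply: contraT => z_neq.
  by have := no_child (top z); rewrite top_child.
have := tree_optimal (is_tree_vertex t); rewrite /pc_cost big_set0 VS_root !sum_setC1.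
have : 0 <= \sum_(e in ES) c e by apply: sumr_ge0 => e /tree_cost_gt0/ltW.
have := nonterminal_prize root_nonterminal; move: t_term; rewrite inE; lra.
Qed.

Lemma root_not_only_child w : root_child w -> exists2 w', root_child w' & w' != w.
Proof.
move=> w_child; have [w' /andP [? ?]|only] :=
  pickP (fun w' => root_child w' && (w' != w)); first by exists w'.
have /and3P [w_in w_neq /eqP w_par] := w_child.
have r_edge : r \in [set w; iter 1 parent w] by rewrite /= w_par set22.
case: (delete_disconnects root_nonterminal
        (iter_parent_edge (k := 0) w_in (depth_gt0 w_in w_neq))
        r_edge w_in w_neq) => z z_in z_neq.
have <- : top z = w by have := only (top z); rewrite top_child //= => /negbFE/eqP.
have depth_z := depth_gt0 z_in z_neq.
apply: connect_iter_parent_avoiding => // [|i le_i]; first exact: leq_pred.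
by apply: iter_parent_neq_root => //; lia.
Qed.

Variable H : V -> {set V}.
Hypothesis regions : terminal_regions E p H.

Lemma region_cover x : exists2 t, t \in Tp p & x \in H t.
Proof. by case: regions => cover _ _ _; apply: cover. Qed.

Lemma region_unique t t' x : t \in Tp p -> t' \in Tp p ->
  x \in H t -> x \in H t' -> t = t'.
Proof.
case: regions => _ disj _ _ t_term t'_term x_t x_t'; apply/eqP; apply: contraT => neq.
by rewrite (disjointFr (disj t t' t_term t'_term neq) x_t) in x_t'.
Qed.

Lemma region_terminal t x : t \in Tp p -> x \in H t -> x \in Tp p -> x = t.
Proof.
case: regions => _ _ region_Tp _ t_term x_t x_term.
have : x \in H t :&: Tp p by rewrite inE x_t x_term.
by rewrite region_Tp // in_set1 => /eqP.
Qed.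

(** [x] lies on the part of the root path of [t] that starts at [t] and stays
    inside the region [H t]. *)
Definition in_prefix t x := (t \in VS) && [exists i : 'I_(depth t).+1,
  (iter i parent t == x) && [forall k : 'I_i.+1, iter k parent t \in H t]].

Lemma in_prefixP t x : reflect (exists i, [/\ t \in VS, (i <= depth t)%N,
    iter i parent t = x & forall k, (k <= i)%N -> iter k parent t \in H t])
  (in_prefix t x).
Proof.
apply: (iffP andP) => [[t_in /existsP [i /andP [/eqP <- /forallP in_H]]]|].
  exists i; split=> //; first by rewrite -ltnS.
  by move=> k le_k; have := in_H (Ordinal (_ : k < i.+1)%N); apply; rewrite ltnS.
move=> [i [t_in le_i <- in_H]]; split=> //; apply/existsP.
have lt_i : (i < (depth t).+1)%N by rewrite ltnS.
exists (Ordinal lt_i); rewrite /= eqxx; apply/forallP => k; apply: in_H.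
by rewrite -ltnS.
Qed.

Lemma in_prefix_region t x : in_prefix t x -> x \in H t.
Proof. by case/in_prefixP=> i [_ _ <- in_H]; apply: in_H. Qed.

Lemma child_extending_prefixes x : x \in VS -> x != r -> x \notin Tp p ->
  exists y, [/\ y \in VS, y != r, parent y = x &
    forall t, t \in Tp p -> in_prefix t x -> in_prefix t y].
Proof.
move=> x_in x_neq x_nt; have [g g_term x_g] := region_cover x.
have owner t : t \in Tp p -> in_prefix t x -> t = g.
  by move=> t_term /in_prefix_region x_t; apply: region_unique t_term g_term x_t x_g.
have [/in_prefixP [i [g_in le_i g_x in_H]]|not_pref] := boolP (in_prefix g x); last first.
  have [y [y_in y_neq y_par]] := nonterminal_has_child x_in x_neq x_nt.
  exists y; split=> // t t_term t_x.
  by move: (t_x); rewrite (owner t t_term t_x) (negbTE not_pref).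
have i_gt0 : (0 < i)%N.
  by rewrite lt0n; apply: contraNneq x_nt => i0; rewrite -g_x i0.
exists (iter i.-1 parent g); split.
- exact: iter_parent_in.
- by apply: iter_parent_neq_root => //; lia.
- by rewrite -iterS prednK.
- move=> t t_term /(owner _ t_term) ->; apply/in_prefixP; exists i.-1.
  by split=> // [|k le_k]; [lia | apply: in_H; lia].
Qed.

(** Descending from [x] into its subtree, always following the prefix that
    contains the current vertex, ends at a terminal [a] whose path up to [x]
    meets no other terminal and no prefix of another terminal. *)
Lemma terminal_below x : x \in VS -> x != r -> exists a i,
  [/\ a \in Tp p, a \in VS, iter i parent a = x, (i < depth a)%N &
   (forall k, (0 < k <= i)%N -> iter k parent a \notin Tp p) /\
   (forall k t, (k <= i)%N -> t \in Tp p -> t != a -> ~~ in_prefix t (iter k parent a))].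
Proof.
move=> x_in x_neq; have := leqnn (#|V| - depth x); move: {2}(#|V| - depth x)%N => m.
elim: m x x_in x_neq => [|m IH] x x_in x_neq le_m.
  by have := depth_lt_card x_in; have := depth_gt0 x_in x_neq; lia.
have [x_term|x_nt] := boolP (x \in Tp p).
  exists x, 0%N; split=> //; first exact: depth_gt0.
  split=> [k ?|k t]; first by exfalso; lia.
  rewrite leqn0 => /eqP -> t_term t_neq /=; apply: contra t_neq => /in_prefix_region x_t.
  by rewrite (region_terminal t_term x_t x_term).
have [y [y_in y_neq y_par y_pref]] := child_extending_prefixes x_in x_neq x_nt.
have depth_y : depth y = (depth x).+1.
  by have := depth_parent y_in; rewrite y_par; have := depth_gt0 y_in y_neq; lia.
have [a [i [a_term a_in a_y lt_i [no_term no_pref]]]] := IH y y_in y_neq ltac:(lia).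
have a_x : iter i.+1 parent a = x by rewrite iterS a_y.
exists a, i.+1; split=> //.
  by have := depth_iter_parent i.+1 a_in; rewrite a_x; have := depth_gt0 x_in x_neq; lia.
split=> [k /andP [k_gt0]|k t]; rewrite leq_eqVlt ltnS => /orP [/eqP ->|le_k].
- by rewrite a_x.
- by apply: no_term; rewrite k_gt0.
- move=> t_term t_neq; rewrite a_x; apply: contra (no_pref i t (leqnn i) t_term t_neq).
  by rewrite a_y; apply: y_pref.
- exact: no_pref.
Qed.

Lemma root_child_capturing_prefixes : (exists t, t \in Tp p) -> exists w,
  root_child w /\ forall t, t \in Tp p -> in_prefix t r -> in_prefix t w.
Proof.
move=> has_term.
have [g /andP [g_term g_r]|none] :=
  pickP (fun g => (g \in Tp p) && in_prefix g r); last first.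
  have [w w_child] := root_has_child has_term.
  by exists w; split=> // t t_term t_r; have := none t; rewrite t_term t_r.
have /in_prefixP [i [g_in le_i g_at_r in_H]] := g_r.
have g_neq : g != r by apply: contraNneq root_nonterminal => <-.
have i_depth : i = depth g.
  by have := depth_iter_parent i g_in; rewrite g_at_r depth_root; lia.
exists (top g); split; first exact: top_child.
move=> t t_term /in_prefix_region r_t.
rewrite (region_unique t_term g_term r_t (in_prefix_region g_r)).
apply/in_prefixP; exists (depth g).-1; split=> //; first exact: leq_pred.
by move=> k le_k; apply: in_H; lia.
Qed.

Definition branch_terminal a :=
  [/\ a \in Tp p, a \in VS, (0 < depth a)%N,
      forall k, (0 < k < depth a)%N -> iter k parent a \notin Tp p
    & forall k t, (k < depth a)%N -> t \in Tp p -> t != a ->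
        ~~ in_prefix t (iter k parent a)].

Lemma exists_branch_terminal w : root_child w -> exists2 a, branch_terminal a & top a = w.
Proof.
case/and3P=> w_in w_neq /eqP w_par.
have depth_w : depth w = 1%N.
  by have := depth_parent w_in; rewrite w_par depth_root; have := depth_gt0 w_in w_neq; lia.
have [a [i [a_term a_in a_w lt_i [no_term no_pref]]]] := terminal_below w_in w_neq.
have i_eq : i = (depth a).-1 by have := depth_iter_parent i a_in; rewrite a_w depth_w; lia.
exists a; last by rewrite /top -i_eq.
split=> // [|k k_range|k t lt_k]; [lia | apply: no_term; lia | apply: no_pref; lia].
Qed.

Definition parent_cost x := c [set x; parent x].

Lemma parent_cost_ge0 x : x \in VS :\ r -> 0 <= parent_cost x.
Proof.
rewrite in_setD1 => /andP [x_neq x_in].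
exact/ltW/tree_cost_gt0/(iter_parent_edge (k := 0) x_in (depth_gt0 x_in x_neq)).
Qed.

Lemma sum_parent_cost_le : \sum_(x in VS :\ r) parent_cost x <= \sum_(e in ES) c e.
Proof.
have edge_inj : {in VS :\ r &, injective (fun x => [set x; parent x])}.
  move=> x y; rewrite !in_setD1 => /andP [x_neq x_in] /andP [y_neq y_in] xy.
  apply/eqP; apply: contraT => neq.
  have /set2P [x_y|x_py] : x \in [set y; parent y] by rewrite -xy set21.
    by rewrite x_y eqxx in neq.
  have /set2P [y_x|y_px] : y \in [set x; parent x] by rewrite xy set21.
    by rewrite y_x eqxx in neq.
  have [_ depth_x _] := parent_spec x_in x_neq.
  have [_ depth_y _] := parent_spec y_in y_neq.
  by rewrite -y_px in depth_x; rewrite -x_py in depth_y; lia.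
rewrite -(big_imset _ edge_inj) /=; apply: sum_le_subset => [|e /tree_cost_gt0/ltW //].
apply/subsetP => e /imsetP [x]; rewrite in_setD1 => /andP [x_neq x_in] ->.
exact: (iter_parent_edge (k := 0) x_in (depth_gt0 x_in x_neq)).
Qed.

Definition chain z j := [set iter (nat_of_ord k) parent z | k : 'I_j].

Lemma chainP z j x : x \in chain z j -> exists2 k, (k < j)%N & x = iter k parent z.
Proof. by case/imsetP=> k _ ->; exists k. Qed.

Lemma sum_chain z j : z \in VS -> (j <= depth z)%N ->
  \sum_(x in chain z j) parent_cost x = \sum_(k < j) parent_cost (iter k parent z).
Proof.
move=> z_in le_j; rewrite big_imset // => k k' _ _ /(iter_parent_inj z_in) eq_kk'.
by apply/val_inj/eq_kk'; [have := ltn_ord k | have := ltn_ord k']; lia.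
Qed.

Lemma chain_sub z j : z \in VS -> (j <= depth z)%N -> chain z j \subset VS :\ r.
Proof.
move=> z_in le_j; apply/subsetP => x /chainP [k lt_k ->].
by rewrite in_setD1 iter_parent_in // andbT iter_parent_neq_root //; lia.
Qed.

Definition prefix t := [set x | in_prefix t x].

Lemma prefix_sub t : ~~ in_prefix t r -> prefix t \subset VS :\ r.
Proof.
move=> not_r; apply/subsetP => x; rewrite inE in_setD1 => t_x.
case/in_prefixP: (t_x) => i [t_in _ t_i _].
rewrite -t_i iter_parent_in // andbT t_i.
by apply: contraNneq not_r => <-.
Qed.

Lemma prefix_disjoint t t' : t \in Tp p -> t' \in Tp p -> t != t' ->
  [disjoint prefix t & prefix t'].
Proof.
move=> t_term t'_term tt'; apply/pred0P => x /=; rewrite !inE.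
apply/andP => -[/in_prefix_region x_t /in_prefix_region x_t'].
by move: tt'; rewrite (region_unique t_term t'_term x_t x_t') eqxx.
Qed.

Lemma branch_prefix_disjoint a t : branch_terminal a -> t \in Tp p -> t != a ->
  [disjoint chain a (depth a) & prefix t].
Proof.
case=> _ _ _ _ no_pref t_term ta; apply/pred0P => x /=; rewrite [x \in prefix t]inE.
by apply/andP => -[/chainP [k lt_k ->]]; apply/negP/no_pref.
Qed.

Lemma prefix_exit t : t \in VS -> ~~ in_prefix t r -> exists j,
  [/\ (j <= depth t)%N, iter j parent t \notin H t
    & forall k, (k < j)%N -> iter k parent t \in H t].
Proof.
move=> t_in not_r.
have exit_exists : exists j, (j <= depth t)%N && (iter j parent t \notin H t).
  have [j j_out|stays] := pickP (fun j : 'I_(depth t).+1 => iter j parent t \notin H t).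
    by exists j; rewrite -ltnS ltn_ord.
  case/negP: not_r; rewrite -(iter_parent_depth t_in); apply/in_prefixP.
  exists (depth t); split=> // k le_k; have lt_k : (k < (depth t).+1)%N by rewrite ltnS.
  by have := stays (Ordinal lt_k) => /negbFE.
case: (ex_minnP exit_exists) => j /andP [le_j j_out] min_j.
exists j; split=> // k lt_k; apply: contraT => k_out; exfalso.
by have := min_j k; rewrite k_out andbT => /(_ ltac:(lia)); lia.
Qed.

Lemma prefix_chain t j : t \in VS -> (j <= depth t)%N -> iter j parent t \notin H t ->
  (forall k, (k < j)%N -> iter k parent t \in H t) -> prefix t = chain t j.
Proof.
move=> t_in le_j j_out in_H; apply/setP => x; rewrite inE; apply/idP/idP.
  case/in_prefixP=> i [_ le_i <- in_H_i].
  have lt_ij : (i < j)%N.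
    by rewrite ltnNge; apply: contra j_out => le_ji; apply: in_H_i.
  by apply/imsetP; exists (Ordinal lt_ij).
case/chainP=> k lt_k ->; apply/in_prefixP; exists k.
by split=> // [|i le_i]; [lia | apply: in_H; lia].
Qed.

Lemma rpc_le_prefix_cost t : t \in VS -> ~~ in_prefix t r ->
  rpc E c p H t <= \sum_(x in prefix t) parent_cost x.
Proof.
move=> t_in not_r; have [j [le_j j_out in_H]] := prefix_exit t_in not_r.
rewrite (prefix_chain t_in le_j j_out in_H) sum_chain //.
apply: (rpc_le_dist_out p j_out).
apply: (dist_in_le_chain c (F := fun i => iter i parent t)) => [x y|i lt_i|i _].
- by rewrite !inE => le_x le_y; apply: (iter_parent_inj t_in); lia.
- by apply/(subsetP tree_edges_sub)/iter_parent_edge => //; lia.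
- by rewrite inE.
Qed.

Lemma dbar_le_branch_cost a : branch_terminal a ->
  ext_le (dbar E c p r a) (Some (\sum_(k < depth a) parent_cost (iter k parent a))).
Proof.
case=> a_term a_in depth_a no_term _; set d := depth a.
have reversed : \sum_(i < d) c [set iter (d - i) parent a; iter (d - i.+1) parent a] =
    \sum_(k < d) parent_cost (iter k parent a).
  rewrite (reindex_inj rev_ord_inj) /=; apply: eq_bigr => i _.
  have lt_i := ltn_ord i.
  have -> : (d - (d - i.+1) = i.+1)%N by lia.
  have -> : (d - (d - i.+1).+1 = i)%N by lia.
  by rewrite /parent_cost setUC.
have := dist_in_le_chain c (A := ~: (Tp p :\ r :\ a))
  (F := fun i => iter (d - i) parent a) (j := d).
rewrite subn0 subnn iter_parent_depth // reversed; apply.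
- by move=> x y; rewrite !inE => le_x le_y /(iter_parent_inj a_in) eq_xy; lia.
- move=> i lt_i; have -> : (d - i = (d - i.+1).+1)%N by lia.
  by rewrite setUC; apply/(subsetP tree_edges_sub)/iter_parent_edge => //; lia.
- move=> i le_i; rewrite in_setC !in_setD1.
  have [->|i_gt0] := posnP i; first by rewrite subn0 iter_parent_depth // eqxx /= andbF.
  have [lt_i|ge_i] := ltnP i d; last by rewrite (_ : d - i = 0)%N /= ?eqxx //; lia.
  by rewrite (negbTE (no_term _ _)) ?andbF //; apply/andP; split; lia.
Qed.

Section Charges.
Variables a b : V.
Hypotheses (a_branch : branch_terminal a) (b_branch : branch_terminal b).
Hypothesis top_ab : top a != top b.
Hypothesis not_r :
  forall t, t \in Tp p -> t \in VS -> t != a -> t != b -> ~~ in_prefix t r.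

Lemma branch_terminals_neq : a != b.
Proof. by apply: contraNneq top_ab => ->. Qed.

(** The vertices whose parent edges pay for the term of terminal [t]. *)
Definition charged t :=
  if t == a then chain a (depth a) else if t == b then chain b (depth b) else prefix t.


Lemma charged_a : charged a = chain a (depth a).
Proof. by rewrite /charged eqxx. Qed.

Lemma charged_b : charged b = chain b (depth b).
Proof. by rewrite /charged eq_sym (negbTE branch_terminals_neq) eqxx. Qed.

Lemma charged_other t : t != a -> t != b -> charged t = prefix t.
Proof. by move=> /negbTE ta /negbTE tb; rewrite /charged ta tb. Qed.

Lemma chargedP t : [\/ t = a /\ charged t = chain a (depth a),
  t = b /\ charged t = chain b (depth b) | [/\ t != a, t != b & charged t = prefix t]].
Proof.
have [->|ta] := eqVneq t a; first by constructor 1; rewrite charged_a.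
have [->|tb] := eqVneq t b; first by constructor 2; rewrite charged_b.
by constructor 3; rewrite charged_other.
Qed.

Lemma charged_disjoint t t' : t \in Tp p -> t' \in Tp p -> t != t' ->
  [disjoint charged t & charged t'].
Proof.
have [_ a_in _ _ _] := a_branch; have [_ b_in _ _ _] := b_branch.
have chains_disj : [disjoint chain a (depth a) & chain b (depth b)].
  apply/pred0P => x /=; apply/andP => -[/chainP [k lt_k ->] /chainP [k' lt_k' eq_x]].
  by move: top_ab; rewrite -(top_iter_parent a_in lt_k) eq_x top_iter_parent ?eqxx.
move=> t_term t'_term.
case: (chargedP t) => [[-> ->]|[-> ->]|[ta tb ->]];
case: (chargedP t') => [[-> ->]|[-> ->]|[t'a t'b ->]]; rewrite ?eqxx // => tt';
first [ by [ | apply: branch_prefix_disjoint | apply: prefix_disjoint]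
      | rewrite disjoint_sym; by [ | apply: branch_prefix_disjoint]].
Qed.

Lemma charged_sub t : t \in Tp p -> t \in VS -> charged t \subset VS :\ r.
Proof.
move=> t_term t_in; have [_ a_in _ _ _] := a_branch; have [_ b_in _ _ _] := b_branch.
case: (chargedP t) => [[-> ->]|[-> ->]|[ta tb ->]]; try exact: chain_sub.
exact/prefix_sub/not_r.
Qed.

Lemma sum_charged :
  \sum_(t in Tp p :&: VS) \sum_(x in charged t) parent_cost x =
    \sum_(k < depth a) parent_cost (iter k parent a)
  + \sum_(k < depth b) parent_cost (iter k parent b)
  + \sum_(t in Tp p :&: VS :\ a :\ b) \sum_(x in prefix t) parent_cost x.
Proof.
have [a_term a_in _ _ _] := a_branch; have [b_term b_in _ _ _] := b_branch.
have a_J : a \in Tp p :&: VS by rewrite in_setI a_term.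
have b_J : b \in Tp p :&: VS :\ a.
  by rewrite in_setD1 in_setI eq_sym branch_terminals_neq b_term.
rewrite (big_setD1 a a_J) (big_setD1 b b_J) /= charged_a charged_b addrA.
rewrite -(sum_chain a_in (leqnn _)) -(sum_chain b_in (leqnn _)); congr (_ + _).
by apply: eq_bigr => t; rewrite !in_setD1 => /and3P [tb ta _]; rewrite charged_other.
Qed.

Lemma sum_rpc_split : \sum_(t in Tp p :\ a :\ b) rpc E c p H t =
  \sum_(t in Tp p :&: VS :\ a :\ b) rpc E c p H t + \sum_(t in Tp p :\: VS) rpc E c p H t.
Proof.
have [_ a_in _ _ _] := a_branch; have [_ b_in _ _ _] := b_branch.
rewrite (big_setID VS) /=; congr (_ + _); apply: eq_bigl => t.
  by rewrite !(in_setD1, in_setI) -!andbA.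
rewrite [LHS]in_setD [RHS]in_setD !in_setD1; case: (boolP (t \in VS)) => //= t_out.
have ta : t != a by apply: contraNneq t_out => ->.
have tb : t != b by apply: contraNneq t_out => ->.
by rewrite ta tb.
Qed.

Hypothesis prize_ge0 : forall v, 0 <= p v.

Lemma cost_lower_bound :
  ext_le (ext_add (ext_add (dbar E c p r a) (dbar E c p r b))
                  (Some (\sum_(t in Tp p :\ a :\ b) rpc E c p H t)))
         (Some (pc_cost c p VS ES)).
Proof.
have packed : \sum_(t in Tp p :&: VS) \sum_(x in charged t) parent_cost x <=
    \sum_(x in VS :\ r) parent_cost x.
  apply: sum_disjoint_family_le
    => [x|t /setIP [t_term t_in]|t t' /setIP [t_term _] /setIP [t'_term _]].
  - exact: parent_cost_ge0.
  - exact: charged_sub.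
  - exact: charged_disjoint.
have inside : \sum_(t in Tp p :&: VS :\ a :\ b) rpc E c p H t <=
    \sum_(t in Tp p :&: VS :\ a :\ b) \sum_(x in prefix t) parent_cost x.
  apply: ler_sum => t; rewrite !in_setD1 in_setI => /and4P [tb ta t_term t_in].
  exact/rpc_le_prefix_cost/not_r.
have outside : \sum_(t in Tp p :\: VS) rpc E c p H t <= \sum_(v in ~: VS) p v.
  apply: le_trans (ler_sum _ (fun t _ => rpc_le_prize E c p H t)) _.
  apply: sum_le_subset => [|v _]; last exact: prize_ge0.
  by apply/subsetP => v /setDP [_ v_out]; rewrite inE.
apply: ext_le_trans
  (ext_leD (ext_leD (dbar_le_branch_cost a_branch) (dbar_le_branch_cost b_branch))
           (ext_le_refl _)) _.
rewrite /= /pc_cost sum_rpc_split; rewrite sum_charged in packed.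
have := sum_parent_cost_le; lra.
Qed.

End Charges.

Lemma two_branch_terminals : (exists t, t \in Tp p) -> exists a b,
  [/\ branch_terminal a, branch_terminal b, top a != top b &
      forall t, t \in Tp p -> t \in VS -> t != a -> t != b -> ~~ in_prefix t r].
Proof.
move=> has_term; have [w1 [w1_child captured]] := root_child_capturing_prefixes has_term.
have [w2 w2_child w21] := root_not_only_child w1_child.
have [a a_branch top_a] := exists_branch_terminal w1_child.
have [b b_branch top_b] := exists_branch_terminal w2_child.
exists a, b; split=> //; first by rewrite top_a top_b eq_sym.
move=> t t_term _ ta _; have [_ _ depth_a _ no_pref] := a_branch.
have lt_top : ((depth a).-1 < depth a)%N by lia.
apply: contra (no_pref _ t lt_top t_term ta) => /(captured t t_term).
by rewrite -top_a.
Qed.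

End OptimalTree.

Unset Implicit Arguments.
Set Strict Implicit.

Theorem proposition2 (V : finType) (E : {set {set V}}) (c : {set V} -> rat)
    (p : V -> rat) (H : V -> {set V}) (vi : V) (VS : {set V}) (ES : {set {set V}})
    (ts vs : seq V) :
  pcstp_instance E c p ->
  (2 <= #|Tp p|)%N ->
  terminal_regions E p H ->
  perm_eq ts (enum (Tp p)) ->
  sorted (fun a b => rpc E c p H a <= rpc E c p H b) ts ->
  vi \notin Tp p ->
  perm_eq vs (enum (Tp p)) ->
  sorted (fun a b => ext_le (dbar E c p vi a) (dbar E c p vi b)) vs ->
  optimal E c p VS ES ->
  vi \in VS ->
  ext_le
    (ext_add (ext_add (dbar E c p vi (nth vi vs 0)) (dbar E c p vi (nth vi vs 1)))
             (Some (\sum_(k < #|Tp p| - 2) rpc E c p H (nth vi ts k))))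
    (Some (pc_cost c p VS ES)).
Proof.
move=> [_ _ c_gt0 p_ge0] two_term regions ts_perm ts_sorted vi_nt vs_perm vs_sorted
  [tree opt] vi_in.
have has_term : exists t, t \in Tp p.
  by apply/card_gt0P; lia.
have [a [b [a_branch b_branch top_ab not_r]]] :=
  two_branch_terminals tree vi_in c_gt0 opt vi_nt regions has_term.
have [a_term _ _ _ _] := a_branch; have [b_term _ _ _ _] := b_branch.
have ab := branch_terminals_neq top_ab.
apply: ext_le_trans
  (cost_lower_bound tree vi_in c_gt0 vi_nt regions a_branch b_branch top_ab not_r p_ge0).
apply: ext_leD; last exact: sum_sorted_prefix_le ts_perm ts_sorted a_term b_term ab.
by apply: sorted_first_two_le vs_sorted _ _ ab; rewrite (perm_mem vs_perm) mem_enum.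
Qed.
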